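(* Let $\sigma>0$ and let $f(z)=\sum_{k=0}^\infty f_kz^k$ with $|f_k|\le(k+2)^{-1-\sigma}$ for all $k\ge0$. Let $g(z)=\exp\left(\int_0^zf(\zeta)\,d\zeta\right)=1+\sum_{k=1}^\infty g_kz^k$. Then $|g_1|\le2^{-1-\sigma}$ and $|g_k|<(k+1)^{-1-\sigma}$ for $k=2,3,\dots$. *)

From HB Require Import structures.
From mathcomp Require Export all_boot all_order all_algebra.
From mathcomp Require Export complex.
From mathcomp Require Export reals exp.
Set Implicit Arguments. Unset Strict Implicit. Unset Printing Implicit Defensive.
Export Order.TTheory GRing.Theory Num.Theory.
Local Open Scope ring_scope.

(* Truncation (through degree n) of the formal primitive
   F(z) = \int_0^z f = \sum_k f_k z^(k+1)/(k+1) of the power series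
   f(z) = \sum_k f_k z^k. Only the terms of degree <= n are kept. *)
Definition prim_trunc (R : rcfType) (f : nat -> R[i]) (n : nat) : {poly R[i]} :=
  \sum_(k < n) (f k / (k.+1)%:R) *: 'X^(k.+1).

(* n-th Taylor coefficient of g = exp(F) = \sum_m F^m / m!.  Since F has no
   constant term, F^m contributes to degree n only for m <= n, and only the
   terms of F of degree <= n matter, so this is exactly [z^n] exp(F). *)
Definition exp_prim_coef (R : rcfType) (f : nat -> R[i]) (n : nat) : R[i] :=
  \sum_(m < n.+1) (m`!%:R)^-1 * ((prim_trunc f n) ^+ m)`_n.

From mathcomp Require Import all_boot all_order all_algebra complex reals exp.
From mathcomp Require Import zify.
Import Order.TTheory GRing.Theory Num.Theory.
Set Implicit Arguments.
Unset Strict Implicit.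
Unset Printing Implicit Defensive.
Local Open Scope ring_scope.

(* Writing F for the primitive of f, g = exp F satisfies g' = F' g = f g, so
   comparing coefficients gives (n+1) g_(n+1) = \sum_(j <= n) f_j g_(n-j).
   By strong induction |g_m| <= (m+1)^e with e = -1 - sigma < 0: the
   recurrence bounds (n+1) |g_(n+1)| by \sum_(j <= n) ((j+2)(n-j+1))^e, and
   (j+2)(n-j+1) >= n+2 with strict inequality at j = 0 once n >= 1, so the
   sum is at most (n+1) (n+2)^e, strictly less when n >= 1. *)

Section PolyPowerCoef.
Variable R : nzRingType.
Implicit Types A B : {poly R}.

Lemma coef_exprn_eq A B n m i : (forall j, (j <= n)%N -> A`_j = B`_j) ->
  (i <= n)%N -> (A ^+ m)`_i = (B ^+ m)`_i.
Proof.
move=> eqAB; elim: m i => [|m IHm] i le_in; first by rewrite !expr0.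
rewrite !exprS !coefM; apply: eq_bigr => -[j /= lt_ji] _.
by rewrite eqAB ?IHm //; lia.
Qed.

Lemma coef_exprn_lt A m i : A`_0 = 0 -> (i < m)%N -> (A ^+ m)`_i = 0.
Proof.
move=> A0; elim: m i => [|m IHm] i // lt_im.
rewrite exprS coefM big1 // => -[[|j] lt_ji] _ /=; first by rewrite A0 mul0r.
by rewrite IHm ?mulr0 //; lia.
Qed.

End PolyPowerCoef.

Section ExpTrunc.
Variable F : numFieldType.

Definition exp_trunc (P : {poly F}) (M : nat) : {poly F} :=
  \sum_(m < M) (m`!%:R)^-1 *: P ^+ m.

Lemma deriv_exp_trunc P M : (exp_trunc P M.+1)^`() = P^`() * exp_trunc P M.
Proof.
rewrite /exp_trunc raddf_sum big_ord_recl /= derivZ expr0 derivC scaler0 add0r.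
rewrite mulr_sumr; apply: eq_bigr => m _.
rewrite derivZ deriv_exp /bump /= add1n add0n -scaler_nat scalerA -scalerAr.
by rewrite factS natrM invfM mulrAC mulVf ?mul1r // pnatr_eq0.
Qed.

End ExpTrunc.

Section ExpPrimCoef.
Variables (R : rcfType) (f : nat -> R[i]).

Lemma coef_prim_trunc N j :
  (prim_trunc f N)`_j = if (0 < j <= N)%N then f j.-1 / j%:R else 0.
Proof.
rewrite /prim_trunc coef_sum.
under eq_bigr do rewrite coefZ coefXn.
case: j => [|j] /=; first by rewrite big1 // => k _; rewrite mulr0.
under eq_bigr do rewrite eqSS eq_sym mulr_natr mulrb.
by rewrite -big_mkcond (big_ord1_eq _ (fun k => f k / k.+1%:R)).
Qed.

Lemma coef_exp_trunc_prim N M k : (k <= N)%N -> (k < M)%N ->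
  (exp_trunc (prim_trunc f N) M)`_k = exp_prim_coef f k.
Proof.
move=> le_kN lt_kM; rewrite /exp_trunc /exp_prim_coef coef_sum.
under eq_bigr do rewrite coefZ.
rewrite (big_ord_widen M (fun m => (m`!%:R)^-1 * (prim_trunc f k ^+ m)`_k)) //.
rewrite [RHS]big_mkcond /=; apply: eq_bigr => m _.
case: ltnP => [_ | le_km].
  congr (_ * _); apply: (coef_exprn_eq (n := k)) => // j le_jk.
  by rewrite !coef_prim_trunc le_jk (leq_trans le_jk le_kN).
by rewrite coef_exprn_lt ?mulr0 // coef_prim_trunc.
Qed.

Lemma exp_prim_coef0 : exp_prim_coef f 0 = 1.
Proof. by rewrite /exp_prim_coef big_ord1 expr0 coef1 fact0 invr1 mulr1. Qed.

Lemma exp_prim_coefS n : exp_prim_coef f n.+1 *+ n.+1 =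
  \sum_(j < n.+1) f j * exp_prim_coef f (n - j).
Proof.
have := congr1 (fun p : {poly R[i]} => p`_n)
  (deriv_exp_trunc (prim_trunc f n.+1) n.+1).
rewrite /= coef_deriv coef_exp_trunc_prim // => ->; rewrite coefM.
apply: eq_bigr => -[j lt_jn] _ /=.
have le_nj_n : (n - j <= n)%N := leq_subr j n.
rewrite coef_deriv coef_prim_trunc /= lt_jn.
rewrite coef_exp_trunc_prim ?ltnS ?(leq_trans le_nj_n) //.
by rewrite -mulrnAr -(mulr_natl (j.+1%:R)^-1) mulfV ?mulr1 // pnatr_eq0.
Qed.

End ExpPrimCoef.

Lemma lt0_gtr_powR (R : realType) (e x y : R) :
  e < 0 -> 0 < x -> x < y -> y `^ e < x `^ e.
Proof.
move=> e_lt0 x_gt0 lt_xy; have y_gt0 := lt_trans x_gt0 lt_xy.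
by rewrite /powR !gt_eqF // ltr_expR ltr_nM2l // ltr_ln ?posrE.
Qed.

Section CoefBound.
Variables (R : realType) (e : R).
Hypothesis e_lt0 : e < 0.

Definition weight (k : nat) : R[i] := (((k%:R : R) `^ e)%:C)%C.

Lemma weight_lt x y : (0 < x)%N -> (x < y)%N -> weight y < weight x.
Proof.
by move=> x_gt0 lt_xy; rewrite ltcR lt0_gtr_powR ?ltr0n ?ltr_nat.
Qed.

Lemma weight_le x y : (0 < x)%N -> (x <= y)%N -> weight y <= weight x.
Proof.
move=> x_gt0; rewrite leq_eqVlt => /predU1P[-> // | lt_xy].
exact/ltW/weight_lt.
Qed.

Lemma weightM x y : weight x * weight y = weight (x * y).
Proof. by rewrite /weight -rmorphM /= natrM powRM ?ler0n. Qed.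

Lemma sum_weight_conv_le n :
  \sum_(j < n.+1) weight (j.+2 * (n - j).+1) <= weight n.+2 *+ n.+1.
Proof.
apply: (@le_trans _ _ (\sum_(j < n.+1) weight n.+2)); last first.
  by rewrite sumr_const card_ord.
by apply: ler_sum => -[j lt_jn] _; apply: weight_le => //=; nia.
Qed.

Lemma sum_weight_conv_lt n : (0 < n)%N ->
  \sum_(j < n.+1) weight (j.+2 * (n - j).+1) < weight n.+2 *+ n.+1.
Proof.
move=> n_gt0; apply: (@lt_le_trans _ _ (\sum_(j < n.+1) weight n.+2)); last first.
  by rewrite sumr_const card_ord.
rewrite !big_ord_recl.
apply: ltr_leD; first by apply: weight_lt => //; rewrite subn0; nia.
by apply: ler_sum => -[j lt_jn] _; apply: weight_le => //=; rewrite /bump /=; nia.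
Qed.

Variable f : nat -> R[i].
Hypothesis f_bound : forall k, `|f k| <= weight (k + 2).

Lemma exp_prim_coefS_le_conv n :
  (forall m, (m <= n)%N -> `|exp_prim_coef f m| <= weight m.+1) ->
  `|exp_prim_coef f n.+1| *+ n.+1 <= \sum_(j < n.+1) weight (j.+2 * (n - j).+1).
Proof.
move=> IHn; rewrite -normrMn exp_prim_coefS.
apply: le_trans (ler_norm_sum _ _ _) _; apply: ler_sum => j _.
rewrite normrM -weightM; apply: ler_pM; rewrite ?normr_ge0 //.
  by rewrite -addn2.
exact/IHn/leq_subr.
Qed.

Lemma exp_prim_coef_le m : `|exp_prim_coef f m| <= weight m.+1.
Proof.
elim/ltn_ind: m => -[|n] IHn; first by rewrite exp_prim_coef0 normr1 /weight powR1.
rewrite -(ler_pMn2r (ltn0Sn n)).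
exact: le_trans (exp_prim_coefS_le_conv IHn) (sum_weight_conv_le n).
Qed.

Lemma exp_prim_coef_lt m : (2 <= m)%N -> `|exp_prim_coef f m| < weight m.+1.
Proof.
case: m => [|[|n]] // _; rewrite -(ltr_pMn2r (ltn0Sn n.+1)).
have IHn m (_ : (m <= n.+1)%N) := exp_prim_coef_le m.
exact: le_lt_trans (exp_prim_coefS_le_conv IHn) (sum_weight_conv_lt (ltn0Sn n)).
Qed.

End CoefBound.

Theorem lemma3p2 (R : realType) (sigma : R) (f : nat -> R[i]) :
  0 < sigma ->
  (forall k : nat, `|f k| <= (((k + 2)%:R : R) `^ (-1 - sigma))%:C%C) ->
  `|exp_prim_coef f 1| <= (((2%:R : R) `^ (-1 - sigma))%:C%C)
  /\ (forall k : nat, (2 <= k)%N ->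
        `|exp_prim_coef f k| < (((k + 1)%:R : R) `^ (-1 - sigma))%:C%C).
Proof.
move=> sigma_gt0 f_bound.
have e_lt0 : -1 - sigma < 0 by rewrite subr_lt0 (lt_trans _ sigma_gt0) ?ltrN10.
split; first exact: (exp_prim_coef_le e_lt0 f_bound 1).
by move=> k le2k; rewrite addn1; apply: exp_prim_coef_lt.
Qed.
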